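(* Let $E$ be an sc-Banach space and let $V$ be a partial quadrant in a finite-dimensional real vector space. Let $f:\mathcal O(V\oplus E,0)\to (E,0)$ be an $\mathrm{sc}^0$-contraction germ. Then there exists a uniquely determined $\mathrm{sc}^0$-germ $\delta:\mathcal O(V,0)\to (E,0)$ such that the graph germ $\mathrm{gr}(\delta):v\mapsto (v,\delta(v))$ satisfies $f\circ \mathrm{gr}(\delta)=0$, i.e. $f(v,\delta(v))=0$ for all $v$ near $0$.
   Context: An sc-Banach space is a Banach space $E$ together with a nested sequence of Banach spaces $E=E_0\supset E_1\supset E_2\supset\cdots$ such that for $m<n$ the inclusion $E_n\to E_m$ is a compact operator and $E_\infty=\bigcap_m E_m$ is dense in every $E_m$; $\|\cdot\|_m$ is the norm of $E_m$. A finite-dimensional space carries the constant structure $E_m=E$, and direct sums carry the levelwise structure $(E\oplus F)_m=E_m\oplus F_m$. A partial quadrant in a finite-dimensional space $F$ is a set $L([0,\infty)^k\oplus\mathbb R^{n-k})$ for a linear isomorphism $L:\mathbb R^n\to F$. For a closed subset $C$ of an sc-Banach space, $C_m=C\cap E_m$. A germ of neighborhoods $\mathcal O(C,0)$ is a decreasing sequence $U_0\supset U_1\supset\cdots$ where $U_m$ is a relatively open neighborhood of $0$ in $C_m$ (topology of $E_m$); germs are identified when they agree after shrinking these neighborhoods. An $\mathrm{sc}^0$-germ $f:\mathcal O(C,0)\to(F,0)$ into an sc-Banach space $F$ is a continuous map $f:U_0\to F_0$ with $f(0)=0$, $f(U_m)\subset F_m$ and $f:U_m\to F_m$ continuous for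 every $m$. An $\mathrm{sc}^0$-contraction germ is an $\mathrm{sc}^0$-germ $f:\mathcal O(V\oplus E,0)\to(E,0)$ of the form $f(v,u)=u-B(v,u)$ such that for every level $m\ge 0$ and every $0<\varepsilon<1$ one has $\|B(v,u)-B(v,u')\|_m\le\varepsilon\|u-u'\|_m$ for all $(v,u),(v,u')$ in some neighborhood of $(0,0)$ in $V\oplus E_m$ (depending on $m$ and $\varepsilon$). *)

From HB Require Import structures.
From mathcomp Require Import all_boot all_order all_algebra.
From mathcomp Require Import reals.
Set Implicit Arguments. Unset Strict Implicit. Unset Printing Implicit Defensive.
Import Order.TTheory GRing.Theory Num.Theory.
Local Open Scope ring_scope.

Section SC.
Variable R : realType.

(* A "level structure" on a carrier real vector space X:
   lev m = the subspace X_m (as a subset of X), nrm m = the norm of X_m. *)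
Record scstr (X : lmodType R) := SCStr { lev : nat -> X -> Prop; nrm : nat -> X -> R }.

Definition subspace_on (X : lmodType R) (S : X -> Prop) : Prop :=
  S 0 /\ forall (a : R) x y, S x -> S y -> S (a *: x + y).

Definition norm_on (X : lmodType R) (S : X -> Prop) (N : X -> R) : Prop :=
  (forall x, S x -> 0 <= N x) /\
  (forall x, S x -> N x = 0 -> x = 0) /\
  (forall (a : R) x, S x -> N (a *: x) = `|a| * N x) /\
  (forall x y, S x -> S y -> N (x + y) <= N x + N y).

Definition converges_to (X : lmodType R) (N : X -> R) (u : nat -> X) (x : X) : Prop :=
  forall e : R, 0 < e -> exists K, forall i, (K <= i)%N -> N (u i - x) < e.

Definition complete_on (X : lmodType R) (S : X -> Prop) (N : X -> R) : Prop :=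
  forall u : nat -> X, (forall i, S (u i)) ->
    (forall e : R, 0 < e -> exists K, forall i j, (K <= i)%N -> (K <= j)%N ->
        N (u i - u j) < e) ->
    exists x, S x /\ converges_to N u x.

Definition banach_on (X : lmodType R) (S : X -> Prop) (N : X -> R) : Prop :=
  subspace_on S /\ norm_on S N /\ complete_on S N.

Definition compact_incl (X : lmodType R) (S : scstr X) (n m : nat) : Prop :=
  forall u : nat -> X, (forall i, lev S n (u i)) ->
    (exists M : R, forall i, nrm S n (u i) <= M) ->
    exists phi : nat -> nat, (forall i, (phi i < phi i.+1)%N) /\
      exists x, lev S m x /\ converges_to (nrm S m) (fun i => u (phi i)) x.

Definition is_scBanach (X : lmodType R) (S : scstr X) : Prop :=
  (forall x : X, lev S 0 x) /\
  (forall m, banach_on (lev S m) (nrm S m)) /\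
  (forall m x, lev S m.+1 x -> lev S m x) /\
  (forall m n, (m < n)%N -> compact_incl S n m) /\
  (forall m x, lev S m x -> forall e : R, 0 < e ->
     exists y, (forall k, lev S k y) /\ nrm S m (y - x) < e).

Definition rvnorm (n : nat) (x : 'rV[R]_n) : R := \big[Num.max/0]_(i < n) `|x 0 i|.

Definition const_sc (n : nat) : scstr 'rV[R]_n :=
  @SCStr _ (fun _ _ => True) (fun _ x => rvnorm x).

Definition dsum_sc (X Y : lmodType R) (S : scstr X) (T : scstr Y) : scstr (X * Y)%type :=
  @SCStr _ (fun m p => lev S m p.1 /\ lev T m p.2)
           (fun m p => Num.max (nrm S m p.1) (nrm T m p.2)).

Definition partial_quadrant (n k : nat) (L : 'M[R]_n) : 'rV[R]_n -> Prop :=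
  fun x => exists y : 'rV[R]_n, (forall i : 'I_n, (i < k)%N -> 0 <= y 0 i) /\ x = y *m L.

Definition relopen (X : lmodType R) (S : scstr X) (m : nat) (C U : X -> Prop) : Prop :=
  (forall x, U x -> C x /\ lev S m x) /\
  (forall x, U x -> exists2 e : R, 0 < e &
     forall y, C y -> lev S m y -> nrm S m (y - x) < e -> U y).

Definition germ_nbhd (X : lmodType R) (S : scstr X) (C : X -> Prop) (U : nat -> X -> Prop) : Prop :=
  (forall m, relopen S m C (U m) /\ U m 0) /\ (forall m x, U m.+1 x -> U m x).

Definition cont_on (X Y : lmodType R) (S : scstr X) (T : scstr Y) (m : nat)
    (U : X -> Prop) (f : X -> Y) : Prop :=
  forall x, U x -> forall e : R, 0 < e -> exists2 d : R, 0 < d &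
    forall y, U y -> nrm S m (y - x) < d -> nrm T m (f y - f x) < e.

(* sc^0-germ f : O(C,0) -> (Y,0), represented by its domain sequence U and f on U 0 *)
Definition sc0_germ (X Y : lmodType R) (S : scstr X) (C : X -> Prop) (T : scstr Y)
    (U : nat -> X -> Prop) (f : X -> Y) : Prop :=
  germ_nbhd S C U /\ f 0 = 0 /\
  (forall m, (forall x, U m x -> lev T m (f x)) /\ cont_on S T m (U m) f).

Definition germ_eq (X Y : lmodType R) (S : scstr X) (C : X -> Prop)
    (U : nat -> X -> Prop) (f : X -> Y) (U' : nat -> X -> Prop) (f' : X -> Y) : Prop :=
  exists W : nat -> X -> Prop, germ_nbhd S C W /\
    (forall m x, W m x -> U m x /\ U' m x) /\ (forall x, W 0 x -> f x = f' x).

Definition sc0_contraction_germ (n : nat) (V : 'rV[R]_n -> Prop) (E : lmodType R)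
    (SE : scstr E) (U : nat -> ('rV[R]_n * E)%type -> Prop) (f : ('rV[R]_n * E)%type -> E)
    : Prop :=
  sc0_germ (dsum_sc (const_sc n) SE) (fun p => V p.1) SE U f /\
  exists B : ('rV[R]_n * E)%type -> E,
    (forall p, U 0 p -> f p = p.2 - B p) /\
    forall (m : nat) (eps : R), 0 < eps -> eps < 1 ->
      exists2 r : R, 0 < r &
        forall v u u', V v -> U m (v, u) -> U m (v, u') ->
          rvnorm v < r -> nrm SE m u < r -> nrm SE m u' < r ->
          nrm SE m (B (v, u) - B (v, u')) <= eps * nrm SE m (u - u').

Definition graph_solves (n : nat) (V : 'rV[R]_n -> Prop) (E : lmodType R)
    (U : nat -> ('rV[R]_n * E)%type -> Prop) (f : ('rV[R]_n * E)%type -> E)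
    (W : nat -> 'rV[R]_n -> Prop) (delta : 'rV[R]_n -> E) : Prop :=
  exists N : 'rV[R]_n -> Prop, relopen (const_sc n) 0 V N /\ N 0 /\
    forall v, N v -> W 0 v /\ U 0 (v, delta v) /\ f (v, delta v) = 0.

End SC.

From HB Require Import structures.
From mathcomp Require Import all_boot all_order all_algebra.
From mathcomp Require Import reals boolp.
From mathcomp Require Import ring lra.
Import Order.TTheory GRing.Theory Num.Theory.
Local Open Scope ring_scope.
Set Implicit Arguments. Unset Strict Implicit.

(* For v near 0 and every level m, u |-> B(v,u) is a 1/2-contraction of a small
   ball of E_m into itself, hence has a unique fixed point there.  The solution
   delta(v) is the fixed point at level 0.  Since the compact inclusion
   E_m -> E_0 is bounded, a small E_m-ball lies in the E_0-ball of uniqueness,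
   so for v in a smaller neighbourhood delta(v) is also the E_m fixed point;
   this gives the sc^0 property.  Continuity at level m comes from
     delta y - delta x = (B(y, delta y) - B(y, delta x)) + (f(x, delta x) - f(y, delta x)),
   whose first term is absorbed by the contraction, and uniqueness of the germ
   from uniqueness of the level-0 fixed point. *)

Section SubspaceNorm.
Variables (R : realType) (X : lmodType R) (S : X -> Prop) (N : X -> R).
Hypotheses (hS : subspace_on S) (hN : norm_on S N).

Lemma subspace_on0 : S 0.
Proof. by case: hS. Qed.

Lemma subspace_onZ a x : S x -> S (a *: x).
Proof. by case: hS => S0 hSZ Sx; have := hSZ a x 0 Sx S0; rewrite addr0. Qed.

Lemma subspace_onD x y : S x -> S y -> S (x + y).
Proof. by case: hS => _ hSZ Sx Sy; have := hSZ 1 x y Sx Sy; rewrite scale1r. Qed.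

Lemma subspace_onB x y : S x -> S y -> S (x - y).
Proof. by move=> Sx Sy; rewrite -scaleN1r; apply/subspace_onD/subspace_onZ. Qed.

Lemma norm_on_ge0 x : S x -> 0 <= N x.
Proof. by case: hN => h _; apply: h. Qed.

Lemma norm_on_eq0 x : S x -> N x = 0 -> x = 0.
Proof. by case: hN => _ [h _]; apply: h. Qed.

Lemma norm_onZ a x : S x -> N (a *: x) = `|a| * N x.
Proof. by case: hN => _ [_ [h _]]; apply: h. Qed.

Lemma norm_onD x y : S x -> S y -> N (x + y) <= N x + N y.
Proof. by case: hN => _ [_ [_ h]]; apply: h. Qed.

Lemma norm_on0 : N 0 = 0.
Proof. by have := norm_onZ 0 subspace_on0; rewrite scale0r normr0 mul0r. Qed.

Lemma norm_on_distC x y : S x -> S y -> N (x - y) = N (y - x).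
Proof.
move=> Sx Sy; rewrite -[x - y]opprB -[- (y - x)]scaleN1r norm_onZ.
  by rewrite normrN normr1 mul1r.
exact: subspace_onB.
Qed.

Lemma norm_on_subr_le0 x y : S x -> S y -> N (x - y) <= 0 -> x = y.
Proof.
move=> Sx Sy hxy; apply/eqP; rewrite -subr_eq0; apply/eqP.
apply: norm_on_eq0; first exact: subspace_onB.
by apply/le_anti; rewrite hxy norm_on_ge0 //; exact: subspace_onB.
Qed.

End SubspaceNorm.

Lemma geometric_lt (R : realType) (c e : R) : 0 <= c -> 0 < e ->
  exists K, forall i, (K <= i)%N -> c / 2 ^+ i < e.
Proof.
move=> c0 e0; exists (Num.Def.archi_bound (c / e)) => i hi.
have hK := archi_boundP (divr_ge0 c0 (ltW e0)).
have hKi : (Num.Def.archi_bound (c / e))%:R <= i%:R :> R by rewrite ler_nat.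
have hi2 : i%:R <= 2 ^+ i :> R by rewrite -natrX ler_nat ltnW // ltn_expl.
have p0 : 0 < 2 ^+ i :> R by rewrite exprn_gt0.
rewrite ltr_pdivrMr // mulrC -ltr_pdivrMr //; lra.
Qed.

Section ContractionFixpoint.
Variables (R : realType) (X : lmodType R) (S : X -> Prop) (N : X -> R).
Variables (T : X -> X) (r : R).
Hypotheses (hS : subspace_on S) (hN : norm_on S N).
Hypothesis hK : forall u u', S u -> S u' -> N u < r -> N u' < r ->
  N (T u - T u') <= 2^-1 * N (u - u').

Lemma contraction_fixpoint_unique x y : S x -> S y -> N x < r -> N y < r ->
  T x = x -> T y = y -> x = y.
Proof.
move=> Sx Sy Nx Ny Tx Ty; apply: (norm_on_subr_le0 hS hN Sx Sy).
have := hK Sx Sy Nx Ny; rewrite Tx Ty.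
have := norm_on_ge0 hN (subspace_onB hS Sx Sy); lra.
Qed.

Hypotheses (hC : complete_on S N) (r_gt0 : 0 < r).
Hypotheses (hT : forall u, S u -> N u < r -> S (T u)) (hT0 : N (T 0) < r / 4).

Local Notation a := (N (T 0)).
Local Notation picard k := (iter k T 0).

Let S0 := subspace_on0 hS.
Let N0 := norm_on0 hS hN.
Let ST0 : S (T 0) := hT S0 (ltac:(by rewrite N0)).

Lemma picard_in_ball k : S (picard k) /\ N (picard k) <= 2 * a.
Proof.
have a0 := norm_on_ge0 hN ST0.
elim: k => [|k [Sk Nk]] /=; first by rewrite N0; split => //; lra.
have Nkr : N (picard k) < r by move: hT0; lra.
have STk := hT Sk Nkr.
split => //; rewrite -[T _](subrK (T 0)).
apply: le_trans (norm_onD hN (subspace_onB hS STk ST0) ST0) _.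
have := hK Sk S0 Nkr; rewrite N0 subr0 => /(_ r_gt0); lra.
Qed.

Let S_picard k := (picard_in_ball k).1.
Let N_picard k : N (picard k) < r.
Proof. have := (picard_in_ball k).2; have := norm_on_ge0 hN ST0; move: hT0; lra. Qed.

Lemma picard_step k : N (picard k.+1 - picard k) <= a / 2 ^+ k.
Proof.
elim: k => [|k IH]; first by rewrite /= subr0 expr0 divr1.
change (N (T (picard k.+1) - T (picard k)) <= a / 2 ^+ k.+1).
apply: le_trans (hK (S_picard _) (S_picard _) (N_picard _) (N_picard _)) _.
by rewrite exprS invfM mulrCA ler_wpM2l ?invr_ge0.
Qed.

Lemma picard_dist i d :
  N (picard (i + d) - picard i) <= 2 * a / 2 ^+ i - 2 * a / 2 ^+ (i + d).
Proof.
elim: d => [|d IH]; first by rewrite addn0 subrr N0 subrr.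
have -> : picard (i + d.+1) - picard i =
    (picard (i + d).+1 - picard (i + d)) + (picard (i + d) - picard i).
  by rewrite addnS addrA subrK.
apply: le_trans (norm_onD hN (subspace_onB hS (S_picard _) (S_picard _))
  (subspace_onB hS (S_picard _) (S_picard _))) _.
have p0 : 0 < 2 ^+ (i + d) :> R by rewrite exprn_gt0.
have := picard_step (i + d); rewrite addnS exprS invfM.
set q := 2 ^+ (i + d) in IH *.
have -> : 2 * a * (2^-1 * q^-1) = a / q by field; rewrite gt_eqF.
have -> : a / q = 2^-1 * (2 * a / q) by field; rewrite gt_eqF.
lra.
Qed.

Lemma picard_cauchy e : 0 < e -> exists K, forall i j, (K <= i)%N -> (K <= j)%N ->
  N (picard i - picard j) < e.
Proof.
have a0 := norm_on_ge0 hN ST0.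
have q0 i : 0 <= 2 * a / 2 ^+ i by rewrite divr_ge0 ?mulr_ge0 ?exprn_ge0.
move=> e0; have [K hK'] := geometric_lt (mulr_ge0 (ler0n _ 2) a0) e0.
exists K => i j hi hj.
wlog hij : i j hi hj / (i <= j)%N => [hwlog|].
  case: (leqP i j) => [|/ltnW] hij; first exact: hwlog.
  by rewrite (norm_on_distC hS hN) ?S_picard //; apply: hwlog.
rewrite (norm_on_distC hS hN) ?S_picard // -(subnKC hij).
have := picard_dist i (j - i); have := hK' i hi; have := q0 (i + (j - i))%N; lra.
Qed.

Theorem contraction_fixpoint : exists x, S x /\ N x < r /\ T x = x.
Proof.
have [x [Sx cx]] := hC S_picard picard_cauchy.
have a0 := norm_on_ge0 hN ST0.
have distC K := norm_on_distC hS hN Sx (S_picard K).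
have Nx : N x < r.
  have [K hK'] := cx (r - 2 * a) (ltac:(move: hT0; lra)).
  have := norm_onD hN (subspace_onB hS Sx (S_picard K)) (S_picard K).
  rewrite subrK distC.
  have := hK' K (leqnn K); have := (picard_in_ball K).2; lra.
have STx := hT Sx Nx.
exists x; split => //; split => //.
apply: (norm_on_subr_le0 hS hN STx Sx); apply/ler_addgt0Pr => e e0.
have [K hK'] := cx (e / 2) (ltac:(lra)).
have -> : T x - x = (T x - T (picard K)) + (picard K.+1 - x) by rewrite addrA subrK.
apply: le_trans (norm_onD hN (subspace_onB hS STx (S_picard K.+1))
  (subspace_onB hS (S_picard _) Sx)) _.
have := hK Sx (S_picard K) Nx (N_picard K); rewrite distC.
have := hK' K (leqnn K); have := hK' K.+1 (leqnSn K).
have := norm_on_ge0 hN (subspace_onB hS (S_picard K) Sx); lra.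
Qed.

End ContractionFixpoint.

Lemma norm_le_of_unit_bound (R : realType) (X : lmodType R) (S Sm : X -> Prop)
    (N Nm : X -> R) (M : R) :
  subspace_on Sm -> norm_on Sm Nm -> norm_on S N -> (forall x, Sm x -> S x) ->
  (forall x, Sm x -> Nm x = 1 -> N x <= M) -> forall x, Sm x -> N x <= M * Nm x.
Proof.
move=> hSm hNm hN hsub hM x Smx.
have [Nx0|Nx0] := eqVneq (Nm x) 0.
  rewrite Nx0 mulr0 (norm_on_eq0 hNm Smx Nx0).
  have := norm_onZ hN 0 (hsub _ (subspace_on0 hSm)).
  by rewrite scale0r normr0 mul0r => ->.
have Nx_gt0 : 0 < Nm x by rewrite lt0r Nx0 (norm_on_ge0 hNm).
have Smy := subspace_onZ hSm (Nm x)^-1 Smx.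
have inv_ge0 : 0 <= (Nm x)^-1 by rewrite invr_ge0 ltW.
have ny : Nm ((Nm x)^-1 *: x) = 1 by rewrite (norm_onZ hNm _ Smx) ger0_norm // mulVf.
have := hM _ Smy ny; rewrite (norm_onZ hN _ (hsub _ Smx)) ger0_norm //.
by rewrite mulrC ler_pdivrMr // mulrC.
Qed.

(* The compact inclusion E_m -> E_0 is bounded: otherwise unit vectors of E_m
   with unbounded E_0-norm would have an E_0-convergent subsequence. *)
Lemma level_norm_bound (R : realType) (E : lmodType R) (SE : scstr E) m :
  is_scBanach SE ->
  exists2 C : R, 0 < C & forall x, lev SE m x -> nrm SE 0 x <= C * nrm SE m x.
Proof.
case: m => [|m] hSE; first by exists 1 => // x _; rewrite mul1r.
have [lev0 [hban [_ [hcomp _]]]] := hSE.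
have [hSm [hNm _]] := hban m.+1; have [_ [hN0 _]] := hban 0%N.
apply: contrapT => hno.
have big i : exists x, lev SE m.+1 x /\ nrm SE m.+1 x = 1 /\ i.+1%:R < nrm SE 0 x.
  apply: contrapT => hi; apply: hno; exists i.+1%:R => //.
  apply: norm_le_of_unit_bound hSm hNm hN0 (fun x _ => lev0 x) _ => x lx nx1.
  by rewrite leNgt; apply/negP => hlt; apply: hi; exists x.
have [u hu] := choice big.
have [|phi [phi_incr [y [_ cy]]]] := hcomp 0%N m.+1 (ltn0Sn m) u (fun i => (hu i).1).
  by exists 1 => i; rewrite (hu i).2.1.
have phi_ge i : (i <= phi i)%N by elim: i => // i IH; apply: leq_ltn_trans IH _.
have [K hK] := cy 1 ltr01.
pose i := maxn K (Num.Def.archi_bound (nrm SE 0 y)).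
have hy := archi_boundP (norm_on_ge0 hN0 (lev0 y)).
have hyi : (Num.Def.archi_bound (nrm SE 0 y))%:R <= (phi i)%:R :> R.
  by rewrite ler_nat (leq_trans (leq_maxr _ _) (phi_ge i)).
have := norm_onD hN0 (lev0 (u (phi i) - y)) (lev0 y); rewrite subrK.
have := hK i (leq_maxl _ _); have := (hu (phi i)).2.2; rewrite -natr1; lra.
Qed.

Lemma rvnorm_ge0 (R : realType) n (x : 'rV[R]_n) : 0 <= rvnorm x.
Proof. exact: bigmax_ge_id. Qed.

Lemma rvnorm0 (R : realType) n : rvnorm (0 : 'rV[R]_n) = 0.
Proof.
apply/le_anti; rewrite rvnorm_ge0 andbT; apply: bigmax_le => // i _.
by rewrite mxE normr0.
Qed.

Lemma rvnormD (R : realType) n (x y : 'rV[R]_n) : rvnorm (x + y) <= rvnorm x + rvnorm y.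
Proof.
apply: bigmax_le => [|i _]; first by rewrite addr_ge0 // rvnorm_ge0.
by rewrite mxE (le_trans (ler_normD _ _)) // lerD // le_bigmax.
Qed.

Lemma relopen_ball (R : realType) n m (V : 'rV[R]_n -> Prop) (c : R) :
  relopen (const_sc R n) m V (fun v => V v /\ rvnorm v < c).
Proof.
split=> [x []//|x [Vx hx]]; exists (c - rvnorm x); first by rewrite subr_gt0.
move=> y Vy _ /= hy; split => //.
by have := rvnormD (y - x) x; rewrite subrK; lra.
Qed.

Lemma relopenI (R : realType) (X : lmodType R) (S : scstr X) m (C P Q : X -> Prop) :
  relopen S m C P -> relopen S m C Q -> relopen S m C (fun x => P x /\ Q x).
Proof.
move=> [hP1 hP2] [_ hQ2]; split=> [x [/hP1]//|x [Px Qx]].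
have [e1 e10 h1] := hP2 x Px; have [e2 e20 h2] := hQ2 x Qx.
exists (Num.min e1 e2); first by rewrite lt_min e10 e20.
by move=> y Cy ly; rewrite lt_min => /andP[y1 y2]; split; [apply: h1|apply: h2].
Qed.

Lemma nested_sub0 (T : Type) (U : nat -> T -> Prop) :
  (forall m x, U m.+1 x -> U m x) -> forall m x, U m x -> U 0%N x.
Proof. by move=> h; elim=> // m IH x /h /IH. Qed.

Lemma germ_nbhdI (R : realType) (X : lmodType R) (S : scstr X) (C : X -> Prop)
    (P Q : nat -> X -> Prop) :
  germ_nbhd S C P -> germ_nbhd S C Q -> germ_nbhd S C (fun m x => P m x /\ Q m x).
Proof.
move=> [hP hPdec] [hQ hQdec]; split=> [m|m x [/hPdec ? /hQdec ?] //].
split; first by apply: relopenI; [exact: (hP m).1|exact: (hQ m).1].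
by split; [exact: (hP m).2|exact: (hQ m).2].
Qed.

Lemma germ_nbhd_const (R : realType) (X : lmodType R) (S : scstr X) (C P : X -> Prop) :
  (forall m, relopen S m C P) -> P 0 -> germ_nbhd S C (fun _ => P).
Proof. by move=> hP P0; split. Qed.

Fixpoint prefix_min (R : realType) (b : R) (g : nat -> R) (m : nat) : R :=
  if m is m'.+1 then Num.min (prefix_min b g m') (g m) else Num.min b (g 0%N).

Section PrefixMin.
Variables (R : realType) (b : R) (g : nat -> R).

Lemma prefix_min_gt0 : 0 < b -> (forall m, 0 < g m) -> forall m, 0 < prefix_min b g m.
Proof. by move=> b0 g0; elim=> [|m IH] /=; rewrite lt_min ?b0 ?IH g0. Qed.

Lemma prefix_min_le m : prefix_min b g m <= g m.
Proof. by case: m => [|m] /=; rewrite ge_min lexx orbT. Qed.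

Lemma prefix_min_leS m : prefix_min b g m.+1 <= prefix_min b g m.
Proof. by rewrite /= ge_min lexx. Qed.

Lemma prefix_min_le_b m : prefix_min b g m <= b.
Proof.
elim: m => [|m IH]; first by rewrite /= ge_min lexx.
exact: le_trans (prefix_min_leS m) IH.
Qed.

End PrefixMin.

Lemma ball_germ_nbhd (R : realType) n (V : 'rV[R]_n -> Prop) (rho : nat -> R) :
  V 0 -> (forall m, 0 < rho m) -> (forall m, rho m.+1 <= rho m) ->
  germ_nbhd (const_sc R n) V (fun m v => V v /\ rvnorm v < rho m).
Proof.
move=> V0 rho0 rhoS; split=> [m|m v [Vv hv]]; last by split=> //; apply: lt_le_trans hv (rhoS m).
by split; [exact: relopen_ball|rewrite rvnorm0].
Qed.

Section ContractionGerm.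
Variables (R : realType) (E : lmodType R) (SE : scstr E) (n : nat).
Variables (V : 'rV[R]_n -> Prop) (U : nat -> ('rV[R]_n * E)%type -> Prop).
Variables (f B : ('rV[R]_n * E)%type -> E).
Hypotheses (hSE : is_scBanach SE) (V0 : V 0).
Hypothesis hf : sc0_germ (dsum_sc (const_sc R n) SE) (fun p => V p.1) SE U f.
Hypothesis fE : forall p, U 0%N p -> f p = p.2 - B p.
Hypothesis hBc : forall (m : nat) (eps : R), 0 < eps -> eps < 1 ->
  exists2 r : R, 0 < r &
    forall v u u', V v -> U m (v, u) -> U m (v, u') ->
      rvnorm v < r -> nrm SE m u < r -> nrm SE m u' < r ->
      nrm SE m (B (v, u) - B (v, u')) <= eps * nrm SE m (u - u').

Lemma U_sub0 m p : U m p -> U 0%N p.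
Proof. exact: (nested_sub0 hf.1.2). Qed.

Lemma U_lev m p : U m p -> lev SE m p.2.
Proof. by move=> /((hf.1.1 m).1.1 p) [_ []]. Qed.

Lemma B_lev m p : U m p -> lev SE m (B p).
Proof.
move=> Ump; have [hSm _] := hSE.2.1 m.
have -> : B p = p.2 - f p by rewrite (fE (U_sub0 Ump)) subKr.
by apply: (subspace_onB hSm); [exact: U_lev Ump|exact: (hf.2.2 m).1].
Qed.

Lemma f_eq0P p : U 0%N p -> f p = 0 <-> B p = p.2.
Proof. by move=> /fE ->; split=> [/eqP|->]; rewrite ?subrr // subr_eq0 => /eqP. Qed.

Lemma B00 : B 0 = 0.
Proof. by apply/f_eq0P; [exact: (hf.1.1 0%N).2|exact: hf.2.1]. Qed.

Definition contraction_radii m (r rho : R) : Prop :=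
  0 < r /\ 0 < rho /\
  (forall v u, V v -> rvnorm v < rho -> lev SE m u -> nrm SE m u < r -> U m (v, u)) /\
  (forall v u u', V v -> rvnorm v < rho -> lev SE m u -> lev SE m u' ->
     nrm SE m u < r -> nrm SE m u' < r ->
     nrm SE m (B (v, u) - B (v, u')) <= 2^-1 * nrm SE m (u - u')) /\
  (forall v, V v -> rvnorm v < rho -> nrm SE m (B (v, 0)) < r / 4).

Lemma exists_contraction_radii m r0 : 0 < r0 -> exists r rho,
  contraction_radii m r rho /\
  (forall x, lev SE m x -> nrm SE m x < r -> nrm SE 0 x < r0).
Proof.
move=> r0_gt0; have [hSm [hNm _]] := hSE.2.1 m.
have [[_ U_open] U0] := hf.1.1 m.
have [e e_gt0 he] := U_open 0 U0.
have [r2 r2_gt0 hr2] := hBc m (ltac:(lra) : 0 < 2^-1) (ltac:(lra) : 2^-1 < 1).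
have [C C_gt0 hC] := level_norm_bound m hSE.
pose r := Num.min e (Num.min r2 (r0 / C)).
have r_gt0 : 0 < r by rewrite !lt_min e_gt0 r2_gt0 divr_gt0.
have [d d_gt0 hd] := (hf.2.2 m).2 0 U0 (r / 4) (ltac:(lra)).
pose rho := Num.min e (Num.min r2 d).
have rho_gt0 : 0 < rho by rewrite !lt_min e_gt0 r2_gt0 d_gt0.
have in_U v u : V v -> rvnorm v < rho -> lev SE m u -> nrm SE m u < r -> U m (v, u).
  move=> Vv hv lu hu; apply: he => //=; rewrite !subr0 gt_max.
  move: hv hu; rewrite !lt_min => /and3P[-> _ _] /and3P[-> _ _] //.
exists r, rho; split; last first.
  move=> x lx; rewrite !lt_min => /and3P[_ _ hx].
  by apply: le_lt_trans (hC x lx) _; rewrite mulrC -ltr_pdivlMr.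
split=> //; split=> //; split=> //; split.
  move=> v u u' Vv hv lu lu' hu hu'.
  move: (hv) (hu) (hu'); rewrite !lt_min => /and3P[_ hv2 _] /and3P[_ hu2 _] /and3P[_ hu2' _].
  by apply: hr2 => //; apply: in_U.
move=> v Vv hv; have Uv0 := in_U v 0 Vv hv (subspace_on0 hSm) (ltac:(by rewrite (norm_on0 hSm hNm))).
have -> : B (v, 0) = 0 - f (v, 0) by rewrite (fE (U_sub0 Uv0)) subKr.
rewrite (norm_on_distC hSm hNm (subspace_on0 hSm) ((hf.2.2 m).1 _ Uv0)).
have := hd (v, 0) Uv0; rewrite hf.2.1 /= !subr0 (norm_on0 hSm hNm) gt_max d_gt0 andbT.
by apply; move: hv; rewrite !lt_min => /and3P[].
Qed.

Section FixedLevel.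
Variables (m : nat) (r rho : R).
Hypothesis hrad : contraction_radii m r rho.

Lemma contraction_radii_fixpoint v : V v -> rvnorm v < rho ->
  exists x, lev SE m x /\ nrm SE m x < r /\ B (v, x) = x.
Proof.
have [hSm [hNm hCm]] := hSE.2.1 m.
have [r_gt0 [_ [in_U [contr small]]]] := hrad.
move=> Vv hv; apply: (contraction_fixpoint (T := fun u => B (v, u))) hSm hNm _ hCm r_gt0 _ _.
- by move=> u u' lu lu' hu hu'; apply: contr.
- by move=> u lu hu; apply: B_lev (in_U v u Vv hv lu hu).
- exact: small.
Qed.

Lemma contraction_radii_fixpoint_unique v x y : V v -> rvnorm v < rho ->
  lev SE m x -> lev SE m y -> nrm SE m x < r -> nrm SE m y < r ->
  B (v, x) = x -> B (v, y) = y -> x = y.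
Proof.
have [hSm [hNm _]] := hSE.2.1 m.
have [_ [_ [_ [contr _]]]] := hrad.
move=> Vv hv; apply: (contraction_fixpoint_unique (T := fun u => B (v, u)) (r := r) hSm hNm).
by move=> u u' lu lu' hu hu'; apply: contr.
Qed.

Lemma fixpoint_cont_on (W : 'rV[R]_n -> Prop) (delta : 'rV[R]_n -> E) :
  (forall v, W v -> [/\ V v, rvnorm v < rho, lev SE m (delta v),
     nrm SE m (delta v) < r & B (v, delta v) = delta v]) ->
  cont_on (const_sc R n) SE m W delta.
Proof.
move=> hW x Wx e e_gt0.
have [hSm [hNm _]] := hSE.2.1 m.
have [_ [_ [in_U [contr _]]]] := hrad.
have [Vx hx lx nx Bx] := hW x Wx.
have Ux := in_U _ _ Vx hx lx nx.
have [d d_gt0 hd] := (hf.2.2 m).2 _ Ux (e / 2) (ltac:(lra)).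
exists d => // y Wy hyx.
have [Vy hy ly ny By] := hW y Wy.
have Uyx := in_U _ _ Vy hy lx nx.
have lfx := (hf.2.2 m).1 _ Ux; have lfyx := (hf.2.2 m).1 _ Uyx.
have hfyx : nrm SE m (f (y, delta x) - f (x, delta x)) < e / 2.
  by apply: hd Uyx _; rewrite /= subrr (norm_on0 hSm hNm) gt_max hyx d_gt0.
have fx0 : f (x, delta x) = 0 by apply/f_eq0P => //; exact: U_sub0 Ux.
have split_diff : delta y - delta x =
    (B (y, delta y) - B (y, delta x)) + (f (x, delta x) - f (y, delta x)).
  by rewrite By (fE (U_sub0 Uyx)) /= fx0 sub0r opprB addrA subrK.
have lB : lev SE m (B (y, delta y) - B (y, delta x)).
  by apply: (subspace_onB hSm); [rewrite By | exact: B_lev Uyx].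
have := norm_onD hNm lB (subspace_onB hSm lfx lfyx); rewrite -split_diff.
rewrite (norm_on_distC hSm hNm lfx lfyx).
have := contr y (delta y) (delta x) Vy hy ly lx ny nx; lra.
Qed.

End FixedLevel.

Section BaseSolution.
Variables (r rho : R).
Hypothesis base : contraction_radii 0 r rho.

Definition base_fixpoint_on (W0 : 'rV[R]_n -> Prop) (delta : 'rV[R]_n -> E) :=
  forall v, W0 v -> rvnorm v < rho /\ nrm SE 0 (delta v) < r /\ B (v, delta v) = delta v.

Lemma fixpoint_germ : exists (W : nat -> 'rV[R]_n -> Prop) (delta : 'rV[R]_n -> E),
  sc0_germ (const_sc R n) V SE W delta /\ base_fixpoint_on (W 0%N) delta.
Proof.
have lev0 := hSE.1; have [hS0 [hN0 _]] := hSE.2.1 0%N.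
have [g hg] : exists g : nat -> R * R, forall m, contraction_radii m (g m).1 (g m).2 /\
    (forall x, lev SE m x -> nrm SE m x < (g m).1 -> nrm SE 0 x < r).
  have: forall m, exists p : R * R, contraction_radii m p.1 p.2 /\
      (forall x, lev SE m x -> nrm SE m x < p.1 -> nrm SE 0 x < r).
    by move=> m; have [r' [rho' ?]] := exists_contraction_radii m base.1; exists (r', rho').
  by case/choice => g hg; exists g.
have [delta hdelta] : exists delta : 'rV[R]_n -> E, forall v, V v -> rvnorm v < rho ->
    nrm SE 0 (delta v) < r /\ B (v, delta v) = delta v.
  have: forall v, exists x, V v -> rvnorm v < rho -> nrm SE 0 x < r /\ B (v, x) = x.
    move=> v; case: (pselect (V v /\ rvnorm v < rho)) => [[Vv hv]|out].
      by have [x [_ ?]] := contraction_radii_fixpoint base Vv hv; exists x.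
    by exists 0 => Vv hv; case: out.
  by case/choice => delta hdelta; exists delta.
pose rhom := prefix_min rho (fun m => (g m).2).
have rhom_gt0 := prefix_min_gt0 base.2.1 (fun m => (hg m).1.2.1).
have below_rho m (v : 'rV[R]_n) : rvnorm v < rhom m -> rvnorm v < rho.
  by move=> hv; apply: lt_le_trans hv (prefix_min_le_b _ _ m).
(* the level-m fixed point lies in the level-0 ball of uniqueness, so it is delta v *)
have delta_lev m (v : 'rV[R]_n) : V v -> rvnorm v < rhom m -> [/\ V v, rvnorm v < (g m).2,
    lev SE m (delta v), nrm SE m (delta v) < (g m).1 & B (v, delta v) = delta v].
  move=> Vv hv; have hvm := lt_le_trans hv (prefix_min_le _ _ m).
  have [x [lx [nx Bx]]] := contraction_radii_fixpoint (hg m).1 Vv hvm.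
  have [nd Bd] := hdelta v Vv (below_rho m v hv).
  suff <- : x = delta v by [].
  exact: (contraction_radii_fixpoint_unique base Vv (below_rho m v hv)
    (lev0 _) (lev0 _) ((hg m).2 _ lx nx) nd Bx Bd).
exists (fun m v => V v /\ rvnorm v < rhom m), delta; split; last first.
  by move=> v [Vv hv]; have hv0 := below_rho 0%N v hv; split; last exact: hdelta.
split; first exact: ball_germ_nbhd V0 rhom_gt0 (prefix_min_leS _ _).
split.
  have hv0 : rvnorm (0 : 'rV[R]_n) < rho by rewrite rvnorm0; exact: base.2.1.
  have [nd Bd] := hdelta 0 V0 hv0.
  apply: (contraction_radii_fixpoint_unique base V0 hv0 (lev0 _) (lev0 _) nd _ Bd B00).
  by rewrite (norm_on0 hS0 hN0); exact: base.1.
move=> m; split=> [v [Vv hv]|]; first by case: (delta_lev m v Vv hv).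
by apply: (fixpoint_cont_on (hg m).1) => v [Vv hv]; apply: delta_lev.
Qed.

Lemma fixpoint_graph_solves (W : nat -> 'rV[R]_n -> Prop) (delta : 'rV[R]_n -> E) :
  sc0_germ (const_sc R n) V SE W delta -> base_fixpoint_on (W 0%N) delta ->
  graph_solves V U f W delta.
Proof.
move=> [[hW _] _] hfix; exists (W 0%N); split; first exact: (hW 0%N).1.
split=> [|v Wv]; first exact: (hW 0%N).2.
have [Vv _] := (hW 0%N).1.1 v Wv; have [hv [nd Bd]] := hfix v Wv.
have Ud : U 0%N (v, delta v) := base.2.2.1 v (delta v) Vv hv (hSE.1 _) nd.
by split=> //; split=> //; apply/f_eq0P.
Qed.

Lemma fixpoint_germ_unique (W W' : nat -> 'rV[R]_n -> Prop) (delta delta' : 'rV[R]_n -> E) :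
  sc0_germ (const_sc R n) V SE W delta -> base_fixpoint_on (W 0%N) delta ->
  sc0_germ (const_sc R n) V SE W' delta' -> graph_solves V U f W' delta' ->
  germ_eq (const_sc R n) V W delta W' delta'.
Proof.
move=> [hW _] hfix [hW' [d0' hd']] [N' [N'open [N'0 hN']]].
have [d d_gt0 hd] := (hd' 0%N).2 0 (hW'.1 0%N).2 r base.1.
exists (fun m v => (W m v /\ W' m v) /\ (N' v /\ (V v /\ rvnorm v < d))).
split; [|split].
- apply: germ_nbhdI (germ_nbhdI hW hW') (germ_nbhd_const _ _).
    by move=> m; apply: relopenI; [exact: N'open|exact: relopen_ball].
  by split=> //; split=> //; rewrite rvnorm0.
- by move=> m v [[]].
move=> v [[Wv W'v] [N'v [Vv hv]]].
have [hv0 [nd Bd]] := hfix v Wv.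
have [_ [U'v fv]] := hN' v N'v.
have nd' : nrm SE 0 (delta' v) < r.
  by have := hd v W'v; rewrite !subr0 d0' subr0; apply.
apply: (contraction_radii_fixpoint_unique base Vv hv0 (hSE.1 _) (hSE.1 _) nd nd' Bd).
exact/f_eq0P.
Qed.

End BaseSolution.

End ContractionGerm.

Theorem theorem2p2 (R : realType) (E : lmodType R) (SE : scstr E)
    (n k : nat) (L : 'M[R]_n)
    (U : nat -> ('rV[R]_n * E)%type -> Prop) (f : ('rV[R]_n * E)%type -> E) :
  is_scBanach SE ->
  (k <= n)%N -> L \in unitmx ->
  sc0_contraction_germ (partial_quadrant k L) SE U f ->
  exists (W : nat -> 'rV[R]_n -> Prop) (delta : 'rV[R]_n -> E),
    sc0_germ (const_sc R n) (partial_quadrant k L) SE W delta /\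
    graph_solves (partial_quadrant k L) U f W delta /\
    forall (W' : nat -> 'rV[R]_n -> Prop) (delta' : 'rV[R]_n -> E),
      sc0_germ (const_sc R n) (partial_quadrant k L) SE W' delta' ->
      graph_solves (partial_quadrant k L) U f W' delta' ->
      germ_eq (const_sc R n) (partial_quadrant k L) W delta W' delta'.
Proof.
move=> hSE _ _ [hf [B [fE hBc]]].
have V0 : partial_quadrant k L 0 by exists 0; split=> [i _|]; rewrite ?mxE ?mul0mx.
have [r [rho [base _]]] := exists_contraction_radii hSE hf fE hBc 0 ltr01.
have [W [delta [germ hfix]]] := fixpoint_germ hSE V0 hf fE hBc base.
exists W, delta; split=> //; split; first exact: (fixpoint_graph_solves hSE fE base germ hfix).
by move=> W' delta'; apply: (fixpoint_germ_unique hSE V0 fE base germ hfix).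
Qed.
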